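(* Let $m,k\ge1$, $N=m+k$, $\alpha>0$, let $\Phi$ be a Minkowski norm on $\mathbb{R}^m$ and $\Psi$ a Minkowski norm on $\mathbb{R}^k$, with $\Phi^0$ the dual norm of $\Phi$. Suppose that, for some $A>0$, there exists a function $K>0$ on $\mathbb{R}^N$ satisfying $$2(\alpha+1)K\,\mathscr L_{\Phi,\Psi,\alpha}(K)=(m+(\alpha+1)k+2\alpha)\left[\Phi(\nabla_z K)^2+\frac{\Phi^0(z)^{2\alpha}}{4}\Psi(\nabla_\sigma K)^2\right]+A\,K^{\frac{2\alpha}{\alpha+1}}.$$ Then the function $\rho>0$ defined by $K=\rho^{2(\alpha+1)}$ solves $$\mathscr L_{\Phi,\Psi,\alpha}\big(\rho^{-(m+(\alpha+1)k-2)}\big)=-\lambda\,\rho^{-(m+(\alpha+1)k+2)}\qquad\text{with }\lambda=\frac{A(m+(\alpha+1)k-2)}{4(\alpha+1)^2}.$$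
   Context: Points of $\mathbb{R}^N=\mathbb{R}^m\times\mathbb{R}^k$ are written $(z,\sigma)$. A Minkowski norm on $\mathbb{R}^n$ is a function $M:\mathbb{R}^n\to[0,\infty)$ such that $M^2\in C^2(\mathbb{R}^n\setminus\{0\})$ is strictly convex and $M(\lambda x)=|\lambda|M(x)$ for all $x$, $\lambda\in\mathbb{R}$; its dual norm is $M^0(x)=\sup_{M(\xi)=1}\langle x,\xi\rangle$. The Finsler Laplacians are $\Delta_\Phi(v)=\operatorname{div}_z(\Phi(\nabla_z v)\nabla\Phi(\nabla_z v))$ and $\Delta_\Psi(v)=\operatorname{div}_\sigma(\Psi(\nabla_\sigma v)\nabla\Psi(\nabla_\sigma v))$, and $\mathscr L_{\Phi,\Psi,\alpha}(v)=\Delta_\Phi(v)+\frac{\Phi^0(z)^{2\alpha}}{4}\Delta_\Psi(v)$. *)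

From HB Require Import structures.
From mathcomp Require Import all_boot all_order all_algebra.
From mathcomp Require Import all_classical all_reals all_analysis.
Set Implicit Arguments. Unset Strict Implicit. Unset Printing Implicit Defensive.
Import Order.TTheory GRing.Theory Num.Theory.
Import numFieldNormedType.Exports.
Local Open Scope classical_set_scope.
Local Open Scope ring_scope.

Section FinslerDefs.
Variable R : realType.

Definition ev n (i : 'I_n) : 'rV[R]_n := delta_mx 0 i.

Definition pd n (f : 'rV[R]_n -> R) (x : 'rV[R]_n) (i : 'I_n) : R :=
  'D_(ev i) f x.

Definition grad n (f : 'rV[R]_n -> R) (x : 'rV[R]_n) : 'rV[R]_n :=
  \row_i pd f x i.

Definition divg n (F : 'rV[R]_n -> 'rV[R]_n) (x : 'rV[R]_n) : R :=
  \sum_i pd (fun y => F y 0 i) x i.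

Definition dotv n (x y : 'rV[R]_n) : R := \sum_i x 0 i * y 0 i.

Definition C2_away0 n (f : 'rV[R]_n -> R) : Prop :=
  [/\ forall x, x != 0 -> forall i, derivable f x (ev i),
      forall x, x != 0 -> forall i j,
          derivable (fun y => 'D_(ev i) f y) x (ev j)
    & forall x, x != 0 -> forall i j,
          {for x, continuous (fun y => 'D_(ev j) (fun z => 'D_(ev i) f z) y)}].

Definition strictly_convex n (f : 'rV[R]_n -> R) : Prop :=
  forall x y (t : R), x != y -> 0 < t < 1 ->
    f ((1 - t) *: x + t *: y) < (1 - t) * f x + t * f y.

Definition minkowski_norm n (M : 'rV[R]_n -> R) : Prop :=
  [/\ forall x, 0 <= M x,
      forall (l : R) x, M (l *: x) = `|l| * M x,
      C2_away0 (fun x => M x ^+ 2)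
    & strictly_convex (fun x => M x ^+ 2)].

Definition dual_norm n (M : 'rV[R]_n -> R) (x : 'rV[R]_n) : R :=
  sup [set dotv x xi | xi in [set xi | M xi = 1]].

Definition ffield n (M : 'rV[R]_n -> R) (xi : 'rV[R]_n) : 'rV[R]_n :=
  M xi *: grad M xi.

Variables m k : nat.

(* functions on R^N = R^m x R^k, points written (z, sigma) *)
Definition gradz (v : 'rV[R]_m -> 'rV[R]_k -> R) z s : 'rV[R]_m :=
  grad (fun z' => v z' s) z.
Definition grads (v : 'rV[R]_m -> 'rV[R]_k -> R) z s : 'rV[R]_k :=
  grad (fun s' => v z s') s.

Definition DeltaPhi (Phi : 'rV[R]_m -> R) (v : 'rV[R]_m -> 'rV[R]_k -> R) z s : R :=
  divg (fun z' => ffield Phi (gradz v z' s)) z.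
Definition DeltaPsi (Psi : 'rV[R]_k -> R) (v : 'rV[R]_m -> 'rV[R]_k -> R) z s : R :=
  divg (fun s' => ffield Psi (grads v z s')) s.

Definition LPPa (Phi : 'rV[R]_m -> R) (Psi : 'rV[R]_k -> R) (alpha : R)
  (v : 'rV[R]_m -> 'rV[R]_k -> R) z s : R :=
  DeltaPhi Phi v z s + (dual_norm Phi z) `^ (2 * alpha) / 4 * DeltaPsi Psi v z s.

Definition L_regular (Phi : 'rV[R]_m -> R) (Psi : 'rV[R]_k -> R)
  (v : 'rV[R]_m -> 'rV[R]_k -> R) : Prop :=
  [/\ forall z s i, derivable (fun z' => v z' s) z (ev i),
      forall z s j, derivable (fun s' => v z s') s (ev j),
      forall z s i, derivable (fun z' => ffield Phi (gradz v z' s) 0 i) z (ev i)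
    & forall z s j, derivable (fun s' => ffield Psi (grads v z s') 0 j) s (ev j)].

End FinslerDefs.

From HB Require Import structures.
From mathcomp Require Import all_boot all_order all_algebra.
From mathcomp Require Import all_classical all_reals all_analysis.
From mathcomp Require Import ring lra.
Import Order.TTheory GRing.Theory Num.Theory.
Import numFieldNormedType.Exports.
Local Open Scope ring_scope.

(* Write K = rho^(2(alpha+1)), so that rho^(-(Q-2)) = K^p with
   p = -(Q-2)/(2(alpha+1)).  Since xi |-> Phi(xi) grad Phi(xi) is homogeneous of
   degree one and <xi, Phi(xi) grad Phi(xi)> = Phi(xi)^2, each Finsler Laplacian
   obeys the power rule
     Delta_Phi (F^p) = p F^(p-1) Delta_Phi F + p (p-1) F^(p-2) Phi(grad F)^2.
   Inserting the equation satisfied by K, the gradient terms cancel exactly for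
   this p, and what remains is -lambda K^(p-2+2alpha/(alpha+1)) = -lambda rho^(-(Q+2)).
   The identity <xi, Phi(xi) grad Phi(xi)> = Phi(xi)^2 is Euler's identity for
   the 2-homogeneous Phi^2; as only the partial derivatives of Phi^2 are known to
   exist, it is derived from convexity, which bounds every directional
   derivative by the corresponding combination of partial derivatives. *)

Section DirectionalDerivatives.
Context {R : realType} {V : normedModType R}.

Lemma derive_line (f : V -> R) x v :
  'D_v f x = 'D_1 (fun h : R => f (h *: v + x)) 0.
Proof.
rewrite /derive; set g1 := fun h => h^-1 *: _; set g2 := fun h => h^-1 *: _.
suff -> : g1 = g2 by [].
by apply/funext => h; rewrite /g1 /g2 /= addr0 scale0r add0r [_%:A]mulr1.
Qed.

Lemma is_derive_comp_dir {f : V -> R} {g : R -> R} {x v dg} :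
  derivable f x v -> is_derive (f x) 1 g dg ->
  is_derive x v (g \o f) (dg * 'D_v f x).
Proof.
move=> /derivable1P df [dg1 <-].
have dg1' : derivable g ((fun h : R => f (h *: v + x)) 0) 1.
  by rewrite /= scale0r add0r.
split.
  apply/derivable1P/derivable1_diffP.
  by apply: (@differentiable_comp _ _ _ _ (fun h : R => f (h *: v + x)) g);
    exact/derivable1_diffP.
rewrite derive_line (derive_line f) -!derive1E.
by rewrite (derive1_comp df dg1') /= scale0r add0r derive1E.
Qed.

Lemma is_derive_powR_dir {F : V -> R} {x v} q : 0 < F x -> derivable F x v ->
  is_derive x v (fun y => F y `^ q) (q * F x `^ (q - 1) * 'D_v F x).
Proof. by move=> F0 dF; exact: is_derive_comp_dir dF (is_derive1_powR q F0). Qed.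

End DirectionalDerivatives.

Section DirectionalRescaling.
Context {R : realType}.

Lemma is_derive_rescale {phi : R -> R} {b x : R} :
  derivable phi (b * x) 1 ->
  is_derive x 1 (fun h => phi (b * h)) (b * 'D_1 phi (b * x)).
Proof.
move=> dphi; have [db Db] : is_derive x 1 ( *%R b) b.
  by apply: is_derive_eq; rewrite ?[b%:A]mulr1.
by have := is_derive_comp_dir db (DeriveDef dphi erefl); rewrite Db mulrC.
Qed.

Lemma is_derive_scale_dir {V : normedModType R} (c : R) {f : V -> R} {x v : V} :
  derivable f x v -> is_derive x (c *: v) f (c * 'D_v f x).
Proof.
move=> /derivable1P df.
have lineE : (fun h : R => f (h *: (c *: v) + x)) = (fun h => f ((c * h) *: v + x)).
  by apply/funext => h; rewrite scalerA mulrC.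
have dphi : derivable (fun h : R => f (h *: v + x)) (c * 0) 1 by rewrite mulr0.
have [d1 d2] := is_derive_rescale dphi.
split; first by apply/derivable1P; rewrite lineE.
by rewrite derive_line lineE d2 mulr0 -derive_line.
Qed.

Lemma derive_homogeneous2 {V : normedModType R} (f : V -> R) c x v :
  (forall (c : R) y, f (c *: y) = c ^+ 2 * f y) -> c != 0 -> derivable f x v ->
  'D_v f (c *: x) = c * 'D_v f x.
Proof.
move=> f_hom c0 /derivable1P dfv.
set phi := fun h : R => f (h *: v + x).
have lineE : (fun h : R => f (h *: v + c *: x)) = (fun h => c ^+ 2 * phi (c^-1 * h)).
  apply/funext => h; rewrite /phi -f_hom scalerDr !scalerA mulrA.
  by rewrite mulfV // mul1r.
have dphi : derivable phi (c^-1 * 0) 1 by rewrite mulr0.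
have [dline Dline] := is_derive_rescale dphi.
rewrite (derive_line f x) derive_line lineE deriveMl // Dline mulr0.
by field.
Qed.

End DirectionalRescaling.

Section ConvexFunctions.
Context {R : realType}.

Definition convex_fun {V : lmodType R} (f : V -> R) := forall x y (t : R),
  0 < t < 1 -> f ((1 - t) *: x + t *: y) <= (1 - t) * f x + t * f y.

Lemma strictly_convex_convex n (f : 'rV[R]_n -> R) :
  strictly_convex f -> convex_fun f.
Proof.
move=> scf x y t t01; have [<-|xy] := eqVneq x y; last exact/ltW/scf.
by rewrite -scalerDl -mulrDl subrK scale1r mul1r.
Qed.

Lemma convex_fun_mean_le {V : lmodType R} (f : V -> R) n (y : 'I_n.+1 -> V) :
  convex_fun f -> f (n.+1%:R^-1 *: \sum_i y i) <= n.+1%:R^-1 * \sum_i f (y i).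
Proof.
move=> cf; elim: n y => [|n IH] y.
  by rewrite !big_ord1 invr1 scale1r mul1r.
rewrite big_ord_recr [X in _ <= _ * X]big_ord_recr /=.
set A := \sum_(i < n.+1) _; set B := \sum_(i < n.+1) _.
set t : R := n.+2%:R^-1.
have n_ge0 : 0 <= n%:R :> R by [].
have t01 : 0 < t < 1 by rewrite invr_gt0 ltr0n /= invf_lt1 ?ltr0n // ltr1n.
have t_split : t = (1 - t) * n.+1%:R^-1.
  by rewrite /t -!natr1; field; rewrite !lt0r_neq0 //; lra.
rewrite scalerDr [X in X *: A]t_split -scalerA.
apply: le_trans (cf _ _ _ t01) _.
rewrite mulrDr [X in X * B]t_split -mulrA lerD2r.
by apply: ler_wpM2l (IH _); rewrite subr_ge0 ltW //; case/andP: t01.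
Qed.

End ConvexFunctions.

Section EulerIdentity.
Context {R : realType}.

Lemma convex_derive_le_partials {n} {f : 'rV[R]_n -> R} {x v : 'rV[R]_n} :
  convex_fun f -> derivable f x v -> (forall i, derivable f x (ev R i)) ->
  'D_v f x <= \sum_i v 0 i * 'D_(ev R i) f x.
Proof.
case: n f x v => [|n] f x v cf dfv dfi.
  by rewrite (thinmx0 v) derive0 big_ord0.
pose N : R := n.+1%:R.
have N0 : N != 0 by rewrite pnatr_eq0.
pose u i := (N * v 0 i) *: ev R i.
(* x + h v is the mean of the points x + h u i, so by Jensen the difference
   quotient along v is bounded by the mean of those along the u i. *)
pose g h := N^-1 * \sum_i f (h *: u i + x).
have [dg <-] : is_derive (0 : R) 1 g (\sum_i v 0 i * 'D_(ev R i) f x).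
  have -> : \sum_i v 0 i * 'D_(ev R i) f x =
      N^-1 *: \sum_i 'D_1 (fun h : R => f (h *: u i + x)) 0.
    rewrite scaler_sumr; apply: eq_bigr => i _.
    rewrite -derive_line; have [_ ->] := is_derive_scale_dir (N * v 0 i) (dfi i).
    by rewrite /GRing.scale /= !mulrA mulVf // mul1r.
  have -> : g = N^-1 \*: \sum_i (fun h : R => f (h *: u i + x)).
    by apply/funext => h; rewrite /g /= fct_sumE.
  apply: is_deriveZ; apply: is_derive_sum => i.
  have [dui _] := is_derive_scale_dir (N * v 0 i) (dfi i).
  by apply: derivableP; move/derivable1P: dui.
apply: ler_cvg_to (cvg_dnbhs_at_right dfv) (cvg_dnbhs_at_right dg) _.
near=> h; have h_gt0 : 0 < h by near: h; exact: nbhs_right_gt.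
rewrite /= [h%:A]mulr1 addr0 /g.
have -> : \sum_i f (0 *: u i + x) = N * f x.
  by under eq_bigr do rewrite scale0r add0r; rewrite sumr_const card_ord mulr_natl.
rewrite mulrA mulVf // mul1r; apply: ler_wpM2l; first by rewrite invr_ge0 ltW.
rewrite lerD2r.
suff <- : N^-1 *: \sum_i (h *: u i + x) = h *: v + x by exact: convex_fun_mean_le.
rewrite big_split /= -scaler_sumr sumr_const card_ord -scaler_nat.
have -> : \sum_i u i = N *: v.
  rewrite [in RHS](row_sum_delta v) scaler_sumr.
  by apply: eq_bigr => i _; rewrite scalerA.
by rewrite scalerDr !scalerA mulrCA mulVf // mulr1 scale1r.
Unshelve. all: by end_near.
Qed.

Lemma euler_identity_homogeneous2 {n} {f : 'rV[R]_n -> R} {x : 'rV[R]_n} : convex_fun f ->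
  (forall (c : R) y, f (c *: y) = c ^+ 2 * f y) ->
  (forall i, derivable f x (ev R i)) ->
  \sum_i x 0 i * 'D_(ev R i) f x = 2 * f x.
Proof.
move=> cf f_hom dfi.
have [dfx Dfx] : is_derive x x f (2 * f x).
  have lineE : (fun h : R => f (h *: x + x)) = (fun h => f x * (h + 1) ^+ 2).
    by apply/funext => h; rewrite -{2}(scale1r x) -scalerDl f_hom mulrC.
  have := is_deriveZ (f x) (is_deriveX 2 (is_derive_shift (0 : R) 1 1)).
  rewrite /= add0r expr1n mulr1 /GRing.scale /= mulr1 => -[dl Dl].
  split; first by apply/derivable1P; rewrite lineE.
  by rewrite derive_line lineE Dl mulrC.
have [dfNx DfNx] := is_derive_scale_dir (-1) dfx.
have := convex_derive_le_partials cf dfx dfi.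
have := convex_derive_le_partials cf dfNx dfi.
rewrite DfNx Dfx.
under eq_bigr do rewrite mxE mulN1r mulNr.
rewrite sumrN; lra.
Qed.

End EulerIdentity.

Section MinkowskiNorm.
Context {R : realType} {n : nat} {Phi : 'rV[R]_n -> R}.
Hypothesis Phi_norm : minkowski_norm Phi.

Lemma minkowski_norm_ge0 x : 0 <= Phi x.
Proof. by case: Phi_norm. Qed.

Lemma minkowski_norm0 : Phi 0 = 0.
Proof. by case: Phi_norm => _ PhiZ _ _; rewrite -(scale0r 0) PhiZ normr0 mul0r. Qed.

Lemma minkowski_norm_sqrZ (c : R) x : Phi (c *: x) ^+ 2 = c ^+ 2 * Phi x ^+ 2.
Proof. by case: Phi_norm => _ PhiZ _ _; rewrite PhiZ exprMn real_normK ?num_real. Qed.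

Lemma minkowski_norm_gt0 x : x != 0 -> 0 < Phi x.
Proof.
move=> x0; rewrite lt_neqAle minkowski_norm_ge0 andbT; apply/eqP => Phix0.
have half01 : 0 < (2 : R)^-1 < 1 by apply/andP; split; lra.
case: Phi_norm => _ _ _ /(_ 0 x 2^-1 ltac:(by rewrite eq_sym) half01).
rewrite scaler0 add0r minkowski_norm_sqrZ -Phix0 minkowski_norm0 expr0n /=.
by rewrite !mulr0 addr0 ltxx.
Qed.

Lemma derivable_minkowski_norm_sqr {x} i : x != 0 ->
  derivable (fun y => Phi y ^+ 2) x (ev R i).
Proof. by case: Phi_norm => _ _ [dPhi2 _ _] _ /dPhi2. Qed.

Lemma is_derive_minkowski_norm {x} i : x != 0 ->
  is_derive x (ev R i) Phi ((2 * Phi x)^-1 * 'D_(ev R i) (fun y => Phi y ^+ 2) x).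
Proof.
move=> x0; have Phi_sqrt : Phi = Num.sqrt \o (fun y => Phi y ^+ 2).
  by apply/funext => y; rewrite /= sqrtr_sqr ger0_norm ?minkowski_norm_ge0.
have Phix2_gt0 : 0 < Phi x ^+ 2 by rewrite exprn_gt0 ?minkowski_norm_gt0.
have := is_derive_comp_dir (derivable_minkowski_norm_sqr i x0)
  (is_derive1_sqrt Phix2_gt0).
by rewrite -Phi_sqrt sqrtr_sqr ger0_norm ?minkowski_norm_ge0.
Qed.

Lemma ffield0 : ffield Phi 0 = 0.
Proof. by rewrite /ffield minkowski_norm0 scale0r. Qed.

Lemma ffieldE x i : x != 0 ->
  ffield Phi x 0 i = 'D_(ev R i) (fun y => Phi y ^+ 2) x / 2.
Proof.
move=> x0; rewrite /ffield /grad !mxE /pd.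
have [_ ->] := is_derive_minkowski_norm i x0.
by field; rewrite gt_eqF ?minkowski_norm_gt0.
Qed.

Lemma dotv_ffield x : dotv x (ffield Phi x) = Phi x ^+ 2.
Proof.
have [->|x0] := eqVneq x 0.
  by rewrite ffield0 minkowski_norm0 expr0n /dotv big1 // => i _; rewrite !mxE mul0r.
have Phi2_convex : convex_fun (fun y => Phi y ^+ 2).
  by apply: strictly_convex_convex; case: Phi_norm.
have euler := euler_identity_homogeneous2 Phi2_convex minkowski_norm_sqrZ
  (fun i => derivable_minkowski_norm_sqr i x0).
rewrite /dotv; under eq_bigr do rewrite ffieldE // mulrA.
by rewrite -mulr_suml euler; field.
Qed.

Lemma ffieldZ (c : R) x : c != 0 -> ffield Phi (c *: x) = c *: ffield Phi x.
Proof.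
move=> c0; have [->|x0] := eqVneq x 0; first by rewrite scaler0 ffield0 scaler0.
have cx0 : c *: x != 0 by rewrite scaler_eq0 negb_or c0 x0.
apply/rowP => i; rewrite [RHS]mxE !ffieldE //.
rewrite derive_homogeneous2 ?mulrA //; first exact: minkowski_norm_sqrZ.
exact: derivable_minkowski_norm_sqr.
Qed.

End MinkowskiNorm.

Definition finsler_laplacian {R : realType} {n} (M F : 'rV[R]_n -> R) y : R :=
  divg (fun y' => ffield M (grad F y')) y.

Section FinslerLaplacianPower.
Context {R : realType} {n : nat} {Phi : 'rV[R]_n -> R}.
Hypothesis Phi_norm : minkowski_norm Phi.

Lemma finsler_laplacian_powR {F : 'rV[R]_n -> R} {p y} : p != 0 ->
  (forall y', 0 < F y') -> (forall y' i, derivable F y' (ev R i)) ->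
  (forall i, derivable (fun y' => ffield Phi (grad F y') 0 i) y (ev R i)) ->
  finsler_laplacian Phi (fun y' => F y' `^ p) y =
  p * F y `^ (p - 1) * finsler_laplacian Phi F y
  + p * (p - 1) * F y `^ (p - 2) * Phi (grad F y) ^+ 2.
Proof.
move=> p0 F_gt0 dF dfield.
pose H y' := F y' `^ (p - 1).
have ffield_powR y' :
    ffield Phi (grad (fun y'' => F y'' `^ p) y') = (p * H y') *: ffield Phi (grad F y').
  rewrite -(ffieldZ Phi_norm); last by rewrite mulf_neq0 // gt_eqF // powR_gt0.
  congr (ffield Phi _); apply/rowP => i; rewrite !mxE /pd.
  by have [_ ->] := is_derive_powR_dir p (F_gt0 y') (dF y' i).
have entry_derive i :
    pd (fun y' => ffield Phi (grad (fun y'' => F y'' `^ p) y') 0 i) y i =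
    p * H y * pd (fun y' => ffield Phi (grad F y') 0 i) y i
    + p * (p - 1) * F y `^ (p - 2) * (grad F y 0 i * ffield Phi (grad F y) 0 i).
  pose f' y' := ffield Phi (grad F y') 0 i.
  have [dH DH] := is_derive_powR_dir (p - 1) (F_gt0 y) (dF y i).
  have productE :
      'D_(ev R i) (H * f') y = H y * 'D_(ev R i) f' y + f' y * 'D_(ev R i) H y.
    exact: deriveM dH (dfield i).
  have fieldE :
      (fun y' => ffield Phi (grad (fun y'' => F y'' `^ p) y') 0 i) = p \*o (H * f').
    by apply/funext => y'; rewrite ffield_powR mxE /= mulrA.
  (* Restricted rewrite patterns spare Rocq costly failed conversions between
     the derivatives of the two different vector fields. *)
  rewrite /pd [X in 'D_(ev R i) X y = _]fieldE deriveMl; last first.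
    exact: derivableM dH (dfield i).
  rewrite productE DH mxE /pd /f' (_ : p - 1 - 1 = p - 2); last by ring.
  ring.
rewrite /finsler_laplacian /divg [LHS](eq_bigr _ (fun i _ => entry_derive i)).
by rewrite [LHS]big_split -!mulr_sumr -(dotv_ffield Phi_norm).
Qed.

End FinslerLaplacianPower.

Section SubLaplacianPower.
Context {R : realType} {m k : nat} {Phi : 'rV[R]_m -> R} {Psi : 'rV[R]_k -> R}.
Hypotheses (Phi_norm : minkowski_norm Phi) (Psi_norm : minkowski_norm Psi).

Lemma LPPa_powR alpha {K : 'rV[R]_m -> 'rV[R]_k -> R} {p} z s : p != 0 ->
  (forall z s, 0 < K z s) -> L_regular Phi Psi K ->
  LPPa Phi Psi alpha (fun z' s' => K z' s' `^ p) z s =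
  p * K z s `^ (p - 1) * LPPa Phi Psi alpha K z s
  + p * (p - 1) * K z s `^ (p - 2) *
    (Phi (gradz K z s) ^+ 2
     + dual_norm Phi z `^ (2 * alpha) / 4 * Psi (grads K z s) ^+ 2).
Proof.
move=> p0 K_gt0 [dKz dKs dfieldz dfields].
have DeltaPhiE v : DeltaPhi Phi v z s = finsler_laplacian Phi (fun z' => v z' s) z by [].
have DeltaPsiE v : DeltaPsi Psi v z s = finsler_laplacian Psi (fun s' => v z s') s by [].
rewrite /LPPa !DeltaPhiE !DeltaPsiE.
rewrite (finsler_laplacian_powR Phi_norm p0 (K_gt0^~ s) (dKz^~ s) (dfieldz z s)).
rewrite (finsler_laplacian_powR Psi_norm p0 (K_gt0 z) (dKs z) (dfields z s)).
rewrite -/(gradz K z s) -/(grads K z s).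
ring.
Qed.

End SubLaplacianPower.

Lemma powRB_gt0 {R : realType} (x r t : R) : 0 < x -> x `^ (r - t) = x `^ r / x `^ t.
Proof. by move=> x_gt0; rewrite powRB // (gt_eqF x_gt0) implybT. Qed.

Lemma gradient_terms_cancel {R : realType} (a Q kap L H A : R) :
  0 < kap -> a + 1 != 0 ->
  2 * (a + 1) * kap * L = (Q + 2 * a) * H + A * kap `^ (2 * a / (a + 1)) ->
  let p := - (Q - 2) / (2 * (a + 1)) in
  p * kap `^ (p - 1) * L + p * (p - 1) * kap `^ (p - 2) * H =
  - (A * (Q - 2) / (4 * (a + 1) ^+ 2)) * kap `^ (- (Q + 2) / (2 * (a + 1))).
Proof.
move=> kap_gt0 a1_neq0 L_eq p; have kap_neq0 : kap != 0 by rewrite gt_eqF.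
have -> : - (Q + 2) / (2 * (a + 1)) = (p - 2) + 2 * a / (a + 1) by rewrite /p; field.
rewrite (@powRD R kap (p - 2)) ?kap_neq0 ?implybT // !(powRB_gt0 _ p) //.
rewrite powRr1 ?ltW // powR_mulrn ?ltW //.
have -> : L = ((Q + 2 * a) * H + A * kap `^ (2 * a / (a + 1))) / (2 * (a + 1) * kap).
  by rewrite -L_eq; field; rewrite kap_neq0 a1_neq0.
by rewrite /p; field; rewrite kap_neq0 a1_neq0.
Qed.

Theorem proposition2p3 (R : realType) (m k : nat) (alpha A : R)
  (Phi : 'rV[R]_m -> R) (Psi : 'rV[R]_k -> R)
  (K : 'rV[R]_m -> 'rV[R]_k -> R) :
  (0 < m)%N -> (0 < k)%N -> 0 < alpha ->
  minkowski_norm Phi -> minkowski_norm Psi ->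
  0 < A ->
  (forall z s, 0 < K z s) ->
  L_regular Phi Psi K ->
  (forall z s,
     2 * (alpha + 1) * K z s * LPPa Phi Psi alpha K z s =
     (m%:R + (alpha + 1) * k%:R + 2 * alpha) *
       (Phi (gradz K z s) ^+ 2
        + (dual_norm Phi z) `^ (2 * alpha) / 4 * Psi (grads K z s) ^+ 2)
     + A * (K z s) `^ (2 * alpha / (alpha + 1))) ->
  let rho := fun z s => K z s `^ (1 / (2 * (alpha + 1))) in
  let Q := m%:R + (alpha + 1) * k%:R in
  let lambda := A * (Q - 2) / (4 * (alpha + 1) ^+ 2) in
  (forall z s, 0 < rho z s /\ K z s = rho z s `^ (2 * (alpha + 1))) /\
  (forall z s,
     LPPa Phi Psi alpha (fun z' s' => rho z' s' `^ (- (Q - 2))) z s =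
     - lambda * rho z s `^ (- (Q + 2))).
Proof.
move=> m_gt0 k_gt0 alpha_gt0 Phi_norm Psi_norm _ K_gt0 K_reg K_eq rho Q lambda.
have alpha1_gt0 : 0 < alpha + 1 by lra.
have rho_powR z s r : rho z s `^ r = K z s `^ (r / (2 * (alpha + 1))).
  by rewrite /rho -powRrM mul1r mulrC.
split=> z s.
  split; first exact: powR_gt0.
  by rewrite rho_powR divff ?mulf_neq0 ?gt_eqF ?powRr1 ?ltW.
have Q2_gt0 : 0 < Q - 2.
  have : (1 : R) <= m%:R by rewrite ler1n.
  have : (1 : R) <= k%:R by rewrite ler1n.
  rewrite /Q; nra.
pose p := - (Q - 2) / (2 * (alpha + 1)).
have p_neq0 : p != 0 by rewrite mulf_neq0 ?invr_eq0 ?mulf_neq0 ?oppr_eq0 ?gt_eqF.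
have -> : (fun z' s' => rho z' s' `^ (- (Q - 2))) = (fun z' s' => K z' s' `^ p).
  by apply/funext => z'; apply/funext => s'; rewrite rho_powR.
rewrite (LPPa_powR Phi_norm Psi_norm alpha z s p_neq0 K_gt0 K_reg) rho_powR.
exact: gradient_terms_cancel (K_gt0 z s) (lt0r_neq0 alpha1_gt0) (K_eq z s).
Qed.
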